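(* Let $n\ge 4$ and let $L$ be an $n$-bow, i.e. a generic length vector satisfying the strict triangle inequality such that $\{n,i\}$ is long for every $i=1,\dots,n-1$. Then any two vertices of $\Gamma(L)$ are connected by a path in $\Gamma(L)$ of length at most $3$.
   Context: Let $n\ge 4$ and $L=(l_1,\dots,l_n)$ be positive reals with $l_i<\sum_{j\ne i}l_j$ for every $i$ (strict triangle inequality), and generic: there is no $J\subseteq[n]$ with $\sum_{i\in J}l_i=\sum_{i\notin J}l_i$. Here $[n]=\{1,\dots,n\}$ and $|L|=\sum_{i=1}^n l_i$. A set $I\subseteq[n]$ is short if $\sum_{i\in I}l_i<|L|/2$ and long otherwise. A cyclically ordered partition of $[n]$ into $k$ parts is a sequence $(A_1,\dots,A_k)$ of pairwise disjoint nonempty sets with union $[n]$, considered up to cyclic shifts $(A_1,\dots,A_k)\sim(A_2,\dots,A_k,A_1)$; there is no ordering inside a part. It is admissible if every part is short. The graph $\Gamma(L)$ has as vertices the admissible cyclically ordered partitions of $[n]$ into 3 parts, written $(I,J,K)$, and as edges the admissible cyclically ordered partitions into 4 parts $(A,B,C,D)$; such an edge is incident to each of the partitions $(A\cup B,C,D)$, $(A,B\cup C,D)$, $(A,B,C\cup D)$, $(D\cup A,B,C)$ that is admissible. Equivalently, two vertices are adjacent iff one is obtained from the other by moving a nonempty proper subset of one part into another part. The length of a path is its number of edges. *)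

From HB Require Import structures.
From mathcomp Require Import all_boot all_order all_algebra.
Set Implicit Arguments. Unset Strict Implicit. Unset Printing Implicit Defensive.
Import Order.TTheory GRing.Theory Num.Theory.
Local Open Scope ring_scope.

Section Polygon.
Variables (R : realFieldType) (n : nat) (l : 'I_n -> R).

Definition totlen : R := \sum_(i < n) l i.

Definition short (I : {set 'I_n}) : bool := \sum_(i in I) l i < totlen / 2%:R.
Definition long (I : {set 'I_n}) : bool := ~~ short I.

Definition triple := ({set 'I_n} * {set 'I_n} * {set 'I_n})%type.

(* admissible cyclically ordered partition into 3 parts (representative) *)
Definition adm3 (t : triple) : Prop :=
  let I := t.1.1 in let J := t.1.2 in let K := t.2 in
  [/\ [/\ I != set0, J != set0 & K != set0],
      [/\ [disjoint I & J], [disjoint J & K] & [disjoint I & K]],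
      I :|: J :|: K = [set: 'I_n] &
      [/\ short I, short J & short K]].

Definition adm4 (A B C D : {set 'I_n}) : Prop :=
  [/\ [/\ A != set0, B != set0, C != set0 & D != set0],
      [/\ [disjoint A & B], [disjoint A & C], [disjoint A & D],
          [disjoint B & C] & [disjoint B & D] /\ [disjoint C & D]],
      A :|: B :|: C :|: D = [set: 'I_n] &
      [/\ short A, short B, short C & short D]].

Definition ceq3 (t u : triple) : Prop :=
  let I := t.1.1 in let J := t.1.2 in let K := t.2 in u = (I, J, K) \/ u = (J, K, I) \/ u = (K, I, J).

(* the four 3-partitions incident to the edge (A,B,C,D) *)
Definition merge4 (A B C D : {set 'I_n}) (k : 'I_4) : triple :=
  match val k with
  | 0 => (A :|: B, C, D)
  | 1 => (A, B :|: C, D)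
  | 2 => (A, B, C :|: D)
  | _ => (D :|: A, B, C)
  end.

Definition adjG (u v : triple) : Prop :=
  exists A B C D, adm4 A B C D /\
    exists i j : 'I_4, [/\ i != j, adm3 (merge4 A B C D i), adm3 (merge4 A B C D j),
                           ceq3 u (merge4 A B C D i) & ceq3 v (merge4 A B C D j)].

Fixpoint walk_le (k : nat) (u v : triple) : Prop :=
  match k with
  | 0 => ceq3 u v
  | k'.+1 => ceq3 u v \/ exists w, adm3 w /\ adjG u w /\ walk_le k' w v
  end.

End Polygon.

From HB Require Import structures.
From mathcomp Require Import all_boot all_order all_algebra.
From mathcomp Require Import lra zify.
Import Order.TTheory GRing.Theory Num.Theory.
Local Open Scope ring_scope.
Set Implicit Arguments. Unset Strict Implicit.

(* Let N be the last index.  Since every pair {a, N} is long, a set containing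
   N is short only if it is {N}, while every set avoiding N and some other
   index is short.  Hence, up to cyclic rotation, every vertex of Gamma(L) is
   ({N}, X, rest) for a "middle part" X: a nonempty set avoiding N and
   at least one other index, and every such X gives a vertex.  If X is a strict
   subset of Y, the edge ({N}, X, Y \ X, rest) joins the vertices of X and Y.
   So it suffices to join any two middle parts X, Y by a chain of at most three
   strict inclusions through middle parts: through X ∩ Y if they meet, through
   X ∪ Y if they neither meet nor cover all indices but N, and otherwise (one
   part, say X, has two elements p, q as n >= 4) along X ⊇ {p} ⊆ {p} ∪ Y ⊇ Y. *)

Section Lengths.
Variables (R : realFieldType) (n : nat) (l : 'I_n -> R).

Lemma sum_setC (T : {set 'I_n}) :
  \sum_(i in T) l i + \sum_(i in ~: T) l i = totlen l.
Proof.
rewrite /totlen [RHS](bigID (fun i => i \in T)) /=; congr (_ + _).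
by apply: eq_bigl => i; rewrite inE.
Qed.

Lemma short_setC (T : {set 'I_n}) : short l T -> long l (~: T).
Proof. rewrite /long /short -leNgt => sT; have := sum_setC T; lra. Qed.

Lemma short_set1 (htri : forall i, l i < \sum_(j < n | j != i) l j) i : short l [set i].
Proof. by rewrite /short big_set1 /totlen (bigD1 i) //=; have := htri i; lra. Qed.

Hypothesis hpos : forall i, 0 < l i.

Lemma short_sub (T U : {set 'I_n}) : T \subset U -> short l U -> short l T.
Proof.
rewrite /short => TU; apply: le_lt_trans.
rewrite [X in _ <= X](big_setID T) /= (setIidPr TU) lerDl.
by apply: sumr_ge0 => i _; apply: ltW.
Qed.

Hypothesis hgen : forall J : {set 'I_n}, \sum_(i in J) l i != \sum_(i in ~: J) l i.

Lemma long_setC (T : {set 'I_n}) : long l T -> short l (~: T).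
Proof.
rewrite /long /short -leNgt => lT; have := sum_setC T; have := hgen T.
rewrite lt_def; lra.
Qed.

End Lengths.

Section Parts.
Variables (n : nat) (N : 'I_n).

(* X is a middle part: X avoids N and at least one other index, and is
   nonempty.  These sets parametrize the vertices of Gamma(L) for a bow. *)
Definition middle (X : {set 'I_n}) : Prop :=
  [/\ N \notin X, exists a, a \in X & exists b, b \notin N |: X].

Definition vertex (X : {set 'I_n}) : triple n := ([set N], X, ~: (N |: X)).

Definition comparable (X Y : {set 'I_n}) : bool := (X \subset Y) || (Y \subset X).

Definition nested (X Y : {set 'I_n}) : bool := (X \proper Y) || (Y \proper X).

Fixpoint chain (k : nat) (X Y : {set 'I_n}) : Prop :=
  match k with
  | 0 => X = Y
  | k'.+1 => X = Y \/
      exists Z, [/\ middle Z, nested X Z & chain k' Z Y]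
  end.

Lemma chain_succ k X Y : chain k X Y -> chain k.+1 X Y.
Proof.
elim: k X => [|k IH] X /=; first by left.
case=> [->|[Z [mZ XZ cZY]]]; first by left.
by right; exists Z; split; last apply: IH.
Qed.

Lemma chain_cons k X Z Y : middle Z -> comparable X Z -> chain k Z Y -> chain k.+1 X Y.
Proof.
move=> mZ XZ cZY; case: (X =P Z) => [->|/eqP XneZ]; first exact: chain_succ.
right; exists Z; split => //.
by move: XZ; rewrite /comparable /nested !properEneq XneZ eq_sym XneZ.
Qed.

Lemma chain_end X Y : middle Y -> comparable X Y -> chain 1 X Y.
Proof. by move=> mY XY; apply: chain_cons mY XY _. Qed.

Lemma middle_set1 p q : p != N -> q != N -> q != p -> middle [set p].
Proof.
move=> pN qN qp; split; first by rewrite inE eq_sym.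
  by exists p; rewrite inE.
by exists q; rewrite !inE negb_or qN qp.
Qed.

Lemma middle_setU1 p q (Y : {set 'I_n}) :
  N \notin Y -> p != N -> q != N -> q != p -> q \notin Y -> middle (p |: Y).
Proof.
move=> NY pN qN qp qY; split; first by rewrite !inE negb_or eq_sym pN.
  by exists p; rewrite !inE eqxx.
by exists q; rewrite !inE !negb_or qN qp.
Qed.

(* Intersecting middle parts are joined through X :&: Y. *)
Lemma chain_meet (X Y : {set 'I_n}) a :
  middle X -> middle Y -> a \in X -> a \in Y -> chain 2 X Y.
Proof.
move=> [NX _ [b bX]] mY aX aY.
have mXY : middle (X :&: Y).
  split; first by rewrite inE (negbTE NX).
    by exists a; rewrite inE aX.
  by exists b; apply: contra bX; rewrite !inE => /orP[->|/andP[->]]; rewrite ?orbT.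
apply: chain_cons mXY _ (chain_end mY _); by rewrite /comparable ?subsetIl ?subsetIr ?orbT.
Qed.

(* Middle parts whose union misses an index other than N are joined
   through X :|: Y. *)
Lemma chain_join (X Y : {set 'I_n}) b :
  middle X -> middle Y -> b \notin N |: (X :|: Y) -> chain 2 X Y.
Proof.
move=> [NX [a aX] _] mY bXY; have [NY _ _] := mY.
have mXY : middle (X :|: Y).
  split; first by rewrite inE negb_or NX.
    by exists a; rewrite inE aX.
  by exists b.
apply: chain_cons mXY _ (chain_end mY _); by rewrite /comparable ?subsetUl ?subsetUr ?orbT.
Qed.

(* Disjoint middle parts X, Y such that X has two elements p, q are joined
   along X ⊇ {p} ⊆ p |: Y ⊇ Y; q witnesses that the intermediate sets are
   middle parts. *)
Lemma chain_split_left (X Y : {set 'I_n}) p q : middle X -> middle Y -> [disjoint X & Y] ->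
  p \in X -> q \in X -> q != p -> chain 3 X Y.
Proof.
move=> [NX _ _] mY dXY pX qX qp; have [NY _ _] := mY.
have pN : p != N by apply: contraNneq NX => <-.
have qN : q != N by apply: contraNneq NX => <-.
have qY : q \notin Y by rewrite (disjointFr dXY qX).
apply: (chain_cons (middle_set1 pN qN qp)); first by rewrite /comparable sub1set pX orbT.
apply: (chain_cons (middle_setU1 NY pN qN qp qY)); first by rewrite /comparable sub1set setU11.
by apply: chain_end mY _; rewrite /comparable subsetUr orbT.
Qed.

(* The mirror image, along X ⊆ p |: X ⊇ {p} ⊆ Y, when Y has two elements. *)
Lemma chain_split_right (X Y : {set 'I_n}) p q : middle X -> middle Y -> [disjoint X & Y] ->
  p \in Y -> q \in Y -> q != p -> chain 3 X Y.
Proof.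
move=> [NX _ _] mY dXY pY qY qp; have [NY _ _] := mY.
have pN : p != N by apply: contraNneq NY => <-.
have qN : q != N by apply: contraNneq NY => <-.
have qX : q \notin X by rewrite (disjointFl dXY qY).
apply: (chain_cons (middle_setU1 NX pN qN qp qX)); first by rewrite /comparable subsetUr.
apply: (chain_cons (middle_set1 pN qN qp)); first by rewrite /comparable sub1set setU11 orbT.
by apply: chain_end mY _; rewrite /comparable sub1set pY.
Qed.

(* Any two middle parts are joined by a chain of length at most three: in the
   remaining case X and Y partition the n - 1 >= 3 indices other than N, so
   one of them has two elements. *)
Lemma chain_diameter (X Y : {set 'I_n}) : (4 <= n)%N -> middle X -> middle Y -> chain 3 X Y.
Proof.
move=> n4 mX mY; have [NX _ _] := mX; have [NY _ _] := mY.
have [dXY|] := boolP [disjoint X & Y]; last first.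
  rewrite -setI_eq0 => /set0Pn[a]; rewrite inE => /andP[aX aY].
  exact/chain_succ/(chain_meet mX mY aX aY).
have [/existsP[b bXY]|] := boolP [exists b, b \notin N |: (X :|: Y)].
  exact/chain_succ/(chain_join mX mY bXY).
rewrite negb_exists => /forallP cover.
have partXY : X :|: Y = [set~ N].
  apply/setP => x; have := cover x; rewrite !inE negbK.
  by case: (x =P N) => [->|_] /=; rewrite ?(negbTE NX) ?(negbTE NY).
have cardXY : (#|X| + #|Y| = n.-1)%N.
  have /eqP XY0 : X :&: Y == set0 by rewrite setI_eq0.
  by have := cardsU X Y; rewrite partXY XY0 cards0 subn0 cardsC1 card_ord.
have [/card_gt1P[p [q [pX qX pq]]]|X1] := ltnP 1 #|X|.
  by apply: (chain_split_left mX mY dXY pX qX); rewrite eq_sym.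
have /card_gt1P[p [q [pY qY pq]]] : (1 < #|Y|)%N by lia.
by apply: (chain_split_right mX mY dXY pY qY); rewrite eq_sym.
Qed.
End Parts.

Section Vertices.
Variable n : nat.

Lemma ceq3_refl (t : triple n) : ceq3 t t.
Proof. by case: t => [[I J] K]; left. Qed.

Lemma ceq3_trans (u v t : triple n) : ceq3 u t -> ceq3 v t -> ceq3 u v.
Proof.
case: u => [[I J] K]; case: v => [[I' J'] K']; rewrite /ceq3 /=.
by case=> [->|[->|->]] [[<- <- <-]|[[<- <- <-]|[<- <- <-]]]; auto.
Qed.

Lemma adjG_sym (R : realFieldType) (l : 'I_n -> R) u v : adjG l u v -> adjG l v u.
Proof.
case=> A [B [C [D [h4 [i [j [ij hi hj hu hv]]]]]]].
by exists A, B, C, D; split => //; exists j, i; rewrite eq_sym.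
Qed.

End Vertices.

Section Bow.
Variables (R : realFieldType) (n : nat) (l : 'I_n -> R) (N : 'I_n).
Hypothesis hpos : forall i, 0 < l i.
(* The bow condition, in the form: the complement of each {a, N} is short. *)
Hypothesis hbow : forall a, a != N -> short l (~: [set a; N]).

Lemma short_avoiding a (T : {set 'I_n}) : a != N -> a \notin T -> N \notin T -> short l T.
Proof.
move=> aN aT NT; apply: short_sub (hbow aN) => //; apply/subsetP => x xT.
by rewrite !inE; apply/norP; split; [apply: contraNneq aT | apply: contraNneq NT] => <-.
Qed.

Lemma short_with_N (T : {set 'I_n}) : short l T -> N \in T -> T = [set N].
Proof.
move=> sT NT; apply/setP => x; rewrite inE; case: (x =P N) => [->//|/eqP xN].
apply/negbTE/negP => xT.
have : short l (~: T).
  apply: short_sub (hbow xN) => //; apply/subsetP => y.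
  by rewrite !inE; apply: contra => /orP[]/eqP->.
by move/short_setC; rewrite setCK /long sT.
Qed.

Lemma middle_short X : middle N X -> short l X.
Proof.
case=> NX _ [b]; rewrite !inE negb_or => /andP[bN bX].
exact: short_avoiding bN bX NX.
Qed.

Hypothesis hN : short l [set N].

Lemma adm3_vertex X : middle N X -> adm3 l (vertex N X).
Proof.
move=> mX; have [NX [a aX] [b bX]] := mX.
have aN : a != N by apply: contraNneq NX => <-.
split.
- by split; apply/set0Pn; [exists N; rewrite inE | exists a | exists b; rewrite inE].
- by rewrite !disjoints1 disjoints_subset setCK subsetUr inE setU11.
- by rewrite setUCr.
- split => //; first exact: middle_short.
  by apply: (short_avoiding aN); rewrite !inE ?eqxx ?aX ?orbT.
Qed.

Lemma vertex_of_parts (I J K : {set 'I_n}) :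
  [disjoint I & J] -> [disjoint J & K] -> [disjoint I & K] -> I :|: J :|: K = setT ->
  short l I -> J != set0 -> K != set0 -> N \in I -> middle N J /\ (I, J, K) = vertex N J.
Proof.
move=> dIJ dJK dIK cover sI /set0Pn[a aJ] /set0Pn[b bK] NI.
have eI := short_with_N sI NI; subst I.
have NJ : N \notin J by rewrite (disjointFr dIJ NI).
have notK x : x \in K -> x \notin N |: J.
  by move=> xK; rewrite in_setU (disjointFl dIK xK) (disjointFl dJK xK).
split; first by split => //; [exists a | exists b; apply: notK].
congr (_, _, _); apply/setP => x; rewrite in_setC.
have := in_setT x; rewrite -cover in_setU.
case: (boolP (x \in K)) => [/notK -> // | _]; by rewrite orbF => ->.
Qed.

(* Every vertex of Gamma(L) is, up to rotation, the vertex of a middle part: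
   rotate the part containing N to the front. *)
Lemma vertex_canonical u : adm3 l u -> exists X, middle N X /\ ceq3 u (vertex N X).
Proof.
case: u => [[I J] K]; rewrite /adm3 /= => -[[nI nJ nK] [dIJ dJK dIK] cover [sI sJ sK]].
have dJI : [disjoint J & I] by rewrite disjoint_sym.
have dKI : [disjoint K & I] by rewrite disjoint_sym.
have dKJ : [disjoint K & J] by rewrite disjoint_sym.
have : N \in I :|: J :|: K by rewrite cover inE.
rewrite !in_setU => /orP[/orP[NI|NJ]|NK].
- have [mJ eJ] := vertex_of_parts dIJ dJK dIK cover sI nJ nK NI.
  by exists J; rewrite -eJ; split => //; left.
- have coverJ : J :|: K :|: I = setT by rewrite -cover setUC setUA.
  have [mK eK] := vertex_of_parts dJK dKI dJI coverJ sJ nK nI NJ.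
  by exists K; rewrite -eK; split => //; right; left.
- have coverK : K :|: I :|: J = setT by rewrite -cover [in RHS]setUC setUA.
  have [mI eI] := vertex_of_parts dKI dIJ dKJ coverK sK nI nJ NK.
  by exists I; rewrite -eI; split => //; right; right.
Qed.

(* If X is strictly contained in Y, the admissible 4-partition
   ({N}, X, Y :\: X, complement of Y) is an edge between their vertices:
   merging the last two parts gives the vertex of X, the middle two that of Y. *)
Lemma adj_proper X Y u v : middle N X -> middle N Y -> X \proper Y ->
  ceq3 u (vertex N X) -> ceq3 v (vertex N Y) -> adjG l u v.
Proof.
move=> mX mY /properP[XY [y yY yX]] hu hv.
have [NX [a aX] _] := mX; have [NY _ [b bY]] := mY.
have aN : a != N by apply: contraNneq NX => <-.
have aY := subsetP XY a aX.
have eY : X :|: Y :\: X = Y.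
  by apply/setP => x; rewrite !inE; case: (boolP (x \in X)) => [/(subsetP XY) ->|_] //=.
have eX : Y :\: X :|: ~: (N |: Y) = ~: (N |: X).
  apply/setP => x; rewrite !inE; case: (x =P N) => [->|_] /=.
    by rewrite ?eqxx ?(negbTE NY) ?andbF.
  by case: (boolP (x \in X)) => [/(subsetP XY) ->|_] //=; rewrite orbN.
exists [set N], X, (Y :\: X), (~: (N |: Y)); split.
- split.
  + split; apply/set0Pn; [exists N | exists a | exists y | exists b] => //;
      by rewrite inE ?yX.
  + rewrite !disjoints1 !inE eqxx (negbTE NX) (negbTE NY) andbF; split => //.
      by rewrite disjoint_sym disjoints_subset setDE subsetIr.
    rewrite !disjoints_subset setCK (subset_trans XY (subsetUr _ _)).
    by rewrite (subset_trans (subsetDl _ _) (subsetUr _ _)).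
  + by rewrite -(setUA [set N]) eY setUCr.
  + split => //; first exact: middle_short.
      by apply: (short_avoiding aN); rewrite !inE ?aX ?(negbTE NY) ?andbF.
    by apply: (short_avoiding aN); rewrite !inE ?aY ?eqxx ?orbT.
- exists (@Ordinal 4 2 isT), (@Ordinal 4 1 isT); rewrite /merge4 /= eX eY.
  by split => //; apply: adm3_vertex.
Qed.

Lemma adj_nested X Y u v : middle N X -> middle N Y -> nested X Y ->
  ceq3 u (vertex N X) -> ceq3 v (vertex N Y) -> adjG l u v.
Proof.
move=> mX mY /orP[XY|YX] hu hv; first exact: adj_proper XY hu hv.
by apply: adjG_sym; apply: adj_proper YX hv hu.
Qed.

Lemma walk_of_chain k X Y u v : middle N X -> chain N k X Y ->
  ceq3 u (vertex N X) -> ceq3 v (vertex N Y) -> walk_le l k u v.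
Proof.
elim: k X u => [|k IH] X u mX /=; first by move=> -> hu hv; apply: ceq3_trans hu hv.
case=> [->|[Z [mZ XZ cZY]]] hu hv; first by left; apply: ceq3_trans hu hv.
right; exists (vertex N Z); split; first exact: adm3_vertex.
split; first exact: adj_nested mX mZ XZ hu (ceq3_refl _).
exact: IH mZ cZY (ceq3_refl _) hv.
Qed.

End Bow.

Theorem mainTheorem4 (R : realFieldType) (n : nat) (l : 'I_n -> R)
  (hn : (4 <= n)%N)
  (hpos : forall i, 0 < l i)
  (htri : forall i, l i < \sum_(j < n | j != i) l j)
  (hgen : forall J : {set 'I_n}, \sum_(i in J) l i != \sum_(i in ~: J) l i)
  (hbow : forall i last : 'I_n, val last = n.-1 -> i != last -> long l [set i; last]) :
  forall u v, adm3 l u -> adm3 l v -> walk_le l 3 u v.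
Proof.
move=> u v au av.
have ltN : (n.-1 < n)%N by lia.
pose N := Ordinal ltN.
have hbowC a : a != N -> short l (~: [set a; N]).
  by move=> aN; apply: long_setC hgen _ _; exact: hbow.
have hN := short_set1 htri N.
have [X [mX hu]] := vertex_canonical hpos hbowC au.
have [Y [mY hv]] := vertex_canonical hpos hbowC av.
exact: (walk_of_chain hpos hbowC hN mX (chain_diameter hn mX mY) hu hv).
Qed.
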